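(* Let $G$ be a finite, simple, connected graph of order $n$ and maximum degree $\Delta$. (1) If $n-2\le\Delta\le n-1$, then $\gamma_P(G)=1$. (2) If $n-4\le\Delta\le n-3$, then $1\le\gamma_P(G)\le 2$.
   Context: For $U\subseteq V(G)$, $cl(U)$ is obtained by coloring $U$ black and repeatedly applying: if a black vertex has exactly one white neighbor, that neighbor becomes black. $S$ is a power dominating set if $cl(N[S])=V(G)$; $\gamma_P(G)$ is the minimum size of a power dominating set. *)

From mathcomp Require Import all_boot all_order all_algebra.
Set Implicit Arguments. Unset Strict Implicit. Unset Printing Implicit Defensive.

(* A finite simple graph: vertex type T : finType, adjacency e : rel T,
   assumed symmetric and irreflexive in the theorem. *)

Section PD.
Variables (T : finType) (e : rel T).

Definition nbhd (v : T) : {set T} := [set w | e v w].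
Definition cnbhd_set (S : {set T}) : {set T} := S :|: \bigcup_(v in S) nbhd v.
Definition deg (v : T) : nat := #|nbhd v|.
Definition maxdeg : nat := \max_(v : T) deg v.

(* B is closed under the color-change rule: whenever a black vertex v has
   exactly one white neighbour w, w is black. *)
Definition cc_closed (B : {set T}) : bool :=
  [forall v, forall w, (v \in B) && (nbhd v :\: B == [set w]) ==> (w \in B)].

(* cl U: the result of repeatedly applying the rule starting from U, i.e.
   the least superset of U closed under the rule. *)
Definition cl (U : {set T}) : {set T} :=
  [set x | [forall B : {set T}, (U \subset B) && cc_closed B ==> (x \in B)]].

Definition power_dominating (S : {set T}) : bool := cl (cnbhd_set S) == setT.

Definition gammaP : nat :=
  \big[minn/#|T|]_(S : {set T} | power_dominating S) #|S|.

Definition connected_graph : Prop := forall x y : T, connect e x y.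
End PD.

From mathcomp Require Import all_boot all_order all_algebra zify.
Import Order.TTheory GRing.Theory Num.Theory.

Set Implicit Arguments.
Unset Strict Implicit.
Unset Printing Implicit Defensive.

(* Let v have maximum degree, so that exactly n - Δ - 1 vertices lie outside
   N[v].  If the colour-change rule stalls while some vertex is still white,
   connectivity gives an edge from a black vertex y to a white one; y cannot
   have exactly one white neighbour, so it has at least two, and adding y to S
   dominates two more vertices.  Hence a set whose closed neighbourhood misses
   at most one vertex is power dominating (part 1, with S = {v}), and if {v}
   fails, the at most three vertices outside N[v] shrink to at most one
   outside N[{v, y}] (part 2). *)

Section ColourChange.
Variables (T : finType) (e : rel T).

Lemma subset_cl (U : {set T}) : U \subset cl e U.
Proof.
apply/subsetP=> x xU; rewrite inE; apply/forallP=> B.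
by apply/implyP=> /andP[/subsetP->].
Qed.

Lemma cc_closed_force (B : {set T}) v w :
  cc_closed e B -> v \in B -> nbhd e v :\: B = [set w] -> w \in B.
Proof.
by move=> /forallP/(_ v)/forallP/(_ w)/implyP cB vB /eqP white_v; apply/cB/andP.
Qed.

Lemma cl_cc_closed (U : {set T}) : cc_closed e (cl e U).
Proof.
apply/forallP=> v; apply/forallP=> w; apply/implyP=> /andP[vU /eqP white_v].
rewrite inE; apply/forallP=> B; apply/implyP=> /andP[UB closedB].
have clB : cl e U \subset B.
  by apply/subsetP=> x; rewrite inE => /forallP/(_ B); rewrite UB closedB.
apply/contraT=> wB; rewrite -(negbTE wB).
apply: (cc_closed_force closedB (subsetP clB v vU)); apply/eqP.
rewrite eqEsubset -{1}white_v setDS //= sub1set inE wB.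
by have := set11 w; rewrite -white_v inE => /andP[_ ->].
Qed.

Lemma card_white_nbhd_neq1 (U : {set T}) y :
  y \in cl e U -> #|nbhd e y :\: cl e U| != 1.
Proof.
move=> yU; apply/negP=> /cards1P[w white_y].
have wU : w \in cl e U.
  exact: cc_closed_force (cl_cc_closed U) yU white_y.
by have := set11 w; rewrite -white_y inE wU.
Qed.

Hypothesis Hconn : connected_graph e.

Lemma connected_edge_across (A : {set T}) x y :
  x \in A -> y \notin A -> exists z z', [/\ z \in A, z' \notin A & e z z'].
Proof.
have /connectP[p] := Hconn x y; elim: p x => [|x' p IHp] x /=; first by move=> _ ->->.
case/andP=> exx' x'p y_last xA; have [x'A|x'A] := boolP (x' \in A).
  exact: IHp x'p y_last x'A.
by exists x, x'.
Qed.

Lemma black_vertex_two_white_nbrs (U : {set T}) x y :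
  x \in cl e U -> y \notin cl e U ->
  exists2 z, z \in cl e U & 1 < #|nbhd e z :\: cl e U|.
Proof.
move=> xU yU; have [z [z' [zU z'U ezz']]] := connected_edge_across xU yU.
exists z => //; rewrite ltn_neqAle eq_sym card_white_nbhd_neq1 //=.
by apply/card_gt0P; exists z'; rewrite in_setD z'U inE.
Qed.

End ColourChange.

Section PowerDomination.
Variables (T : finType) (e : rel T).

Lemma cnbhd_set0 : cnbhd_set e set0 = set0.
Proof. by rewrite /cnbhd_set big_set0 setU0. Qed.

Lemma cnbhd_set1 v : cnbhd_set e [set v] = v |: nbhd e v.
Proof. by rewrite /cnbhd_set big_set1. Qed.

Lemma cnbhd_setU1 v S :
  cnbhd_set e (v |: S) = (v |: nbhd e v) :|: cnbhd_set e S.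
Proof. by rewrite /cnbhd_set bigcup_setU big_set1 setUACA. Qed.

Lemma card_undominated1 v : irreflexive e ->
  #|~: cnbhd_set e [set v]| = #|T| - (deg e v).+1.
Proof.
by move=> Hirr; rewrite cardsCs setCK cnbhd_set1 cardsU1 inE Hirr.
Qed.

Lemma cl_set0 : cl e set0 = set0.
Proof.
apply/setP=> x; rewrite !inE; apply/negbTE/forallPn; exists set0.
have closed0 : cc_closed e set0.
  by apply/forallP=> v; apply/forallP=> w; rewrite inE.
by rewrite sub0set closed0 inE.
Qed.

Lemma gammaP_le_card (S : {set T}) : power_dominating e S -> gammaP e <= #|S|.
Proof. by move=> pdS; rewrite /gammaP -minEnat -leEnat bigmin_le_cond. Qed.

Lemma gammaP_gt0 : 0 < #|T| -> 0 < gammaP e.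
Proof.
move=> T_gt0; rewrite /gammaP; elim/big_ind: _ => //.
  by move=> m n; rewrite leq_min => -> ->.
move=> S pdS; rewrite card_gt0; apply: contraTneq pdS => ->.
have [x _] := card_gt0P T_gt0.
rewrite /power_dominating cnbhd_set0 cl_set0 eq_sym.
by apply/eqP=> /setP/(_ x); rewrite !inE.
Qed.

Lemma mem_cl_cnbhd_set (S : {set T}) s : s \in S -> s \in cl e (cnbhd_set e S).
Proof. by move=> sS; rewrite (subsetP (subset_cl _ _)) // !inE sS. Qed.

Lemma white_nbhd_subset_undominated (S : {set T}) z :
  nbhd e z :\: cl e (cnbhd_set e S) \subset ~: cnbhd_set e S.
Proof. by rewrite setDE (subset_trans (subsetIr _ _)) // setCS subset_cl. Qed.

Hypothesis Hconn : connected_graph e.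

Lemma exists_vertex_dominating_two_more (S : {set T}) :
  S != set0 -> ~~ power_dominating e S ->
  exists y, #|~: cnbhd_set e (y |: S)| + 2 <= #|~: cnbhd_set e S|.
Proof.
move=> /set0Pn[s /mem_cl_cnbhd_set sU] not_pd.
have [w _ w_white] : exists2 w, w \in setT & w \notin cl e (cnbhd_set e S).
  by apply/subsetPn; move: not_pd; rewrite /power_dominating eqEsubset subsetT.
have [y _ two_white] := black_vertex_two_white_nbrs Hconn sU w_white.
exists y; set W := ~: cnbhd_set e S; set X := nbhd e y :\: _ in two_white *.
have XW : X \subset W := white_nbhd_subset_undominated S y.
have : ~: cnbhd_set e (y |: S) \subset W :\: X.
  apply/subsetP=> x; rewrite cnbhd_setU1 setCU in_setI in_setC in_setU1 negb_or.
  case/andP=> /andP[_ not_nbr] undominated.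
  by rewrite in_setD undominated andbT in_setD (negbTE not_nbr) andbF.
move/subset_leq_card; rewrite cardsD (setIidPr XW).
have := subset_leq_card XW; lia.
Qed.

Lemma power_dominating_of_card_undominated_le1 (S : {set T}) :
  S != set0 -> #|~: cnbhd_set e S| <= 1 -> power_dominating e S.
Proof.
move=> S_neq0 few_undominated; apply/contraT.
case/(exists_vertex_dominating_two_more S_neq0)=> y.
by move/leq_trans/(_ few_undominated); rewrite addn2.
Qed.

End PowerDomination.

Theorem mainTheorem5 (T : finType) (e : rel T)
  (Hsym : symmetric e) (Hirr : irreflexive e)
  (Hne : 0 < #|T|) (Hconn : connected_graph e) :
  let n : int := Posz #|T| in
  let D : int := Posz (maxdeg e) in
  ((n - 2 <= D)%R -> (D <= n - 1)%R -> gammaP e = 1) /\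
  ((n - 4 <= D)%R -> (D <= n - 3)%R -> 1 <= gammaP e <= 2).
Proof.
move=> n D.
have [v maxdeg_v] := @bigop.eq_bigmax T (deg e) Hne.
have undominated_v : #|~: cnbhd_set e [set v]| = #|T| - (maxdeg e).+1.
  by rewrite /maxdeg maxdeg_v card_undominated1.
have v_neq0 : [set v] != set0 by apply/set0Pn; exists v; rewrite set11.
have gammaP_ge1 := gammaP_gt0 e Hne.
split; rewrite /n /D => Dlo _.
- have pd_v : power_dominating e [set v].
    by apply: power_dominating_of_card_undominated_le1; rewrite // undominated_v; lia.
  by apply/eqP; rewrite eqn_leq gammaP_ge1 andbT -(cards1 v) gammaP_le_card.
- rewrite gammaP_ge1 /=; have [pd_v|] := boolP (power_dominating e [set v]).
    by rewrite (leq_trans (gammaP_le_card pd_v)) ?cards1.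
  case/(exists_vertex_dominating_two_more Hconn v_neq0) => y two_more.
  have pd_vy : power_dominating e (y |: [set v]).
    apply: power_dominating_of_card_undominated_le1 => //; last by lia.
    by apply/set0Pn; exists y; rewrite setU11.
  by rewrite (leq_trans (gammaP_le_card pd_vy)) // cardsU1 cards1; case: (_ \in _).
Qed.
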